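(* For every integer $n\geq 1$, $$c_n(231,213 : 231)=c_n(312,132 : 312)=\begin{cases}k^2+1 & \text{if } n=2k,\\ k^2+k+1 & \text{if } n=2k+1.\end{cases}$$
   Context: $S_n$ is the symmetric group on $[n]=\{1,\dots,n\}$, and a permutation $\pi\in S_n$ is written in one-line notation $\pi=\pi_1\pi_2\cdots\pi_n$ with $\pi_i=\pi(i)$. For $\tau\in S_k$, $k\le n$, $\pi$ contains $\tau$ if there are indices $i_1<\dots<i_k$ with $\pi_{i_s}>\pi_{i_t}$ iff $\tau_s>\tau_t$ for all $1\le s<t\le k$; otherwise $\pi$ avoids $\tau$. $\pi^2$ denotes the composition $\pi\circ\pi$. For patterns $\sigma_1,\sigma_2,\rho$, $c_n(\sigma_1,\sigma_2 : \rho)$ denotes the number of permutations $\pi\in S_n$ such that $\pi$ avoids both $\sigma_1$ and $\sigma_2$ and $\pi^2$ avoids $\rho$. *)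

From mathcomp Require Import all_boot all_fingroup.
Set Implicit Arguments. Unset Strict Implicit. Unset Printing Implicit Defensive.

(* Permutations of [n] are represented by 'S_n = {perm 'I_n} (values 0..n-1,
   i.e. everything shifted down by one, which does not affect pattern
   containment).  One-line notation: pi_i = pi i. *)

Definition containsb (n : nat) (pi : 'S_n) (tau : seq nat) : bool :=
  [exists idx : {ffun 'I_(size tau) -> 'I_n},
    [forall s : 'I_(size tau), forall t : 'I_(size tau),
      (s < t) ==> ((idx s < idx t) &&
                   ((pi (idx s) > pi (idx t)) == (nth 0 tau t < nth 0 tau s)))]].

Definition avoidsb (n : nat) (pi : 'S_n) (tau : seq nat) : bool :=
  ~~ containsb pi tau.

Definition c_count (n : nat) (s1 s2 rho : seq nat) : nat :=
  #|[set pi : 'S_n | avoidsb pi s1 && avoidsb pi s2 && avoidsb (pi * pi)%g rho]|.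

(* Conjugation by the reversal i |-> n-1-i is the reverse-complement symmetry: it
   exchanges the patterns 231, 213 with 312, 132 and commutes with squaring, which
   gives the first equality.
   Now let pi avoid 132 and 312 with pi^2 avoiding 312.  Its last value is 0 or n-1;
   in the second case deleting it leaves a smaller such permutation.  In the first
   case, with v = pi(0), the values above v increase and those below v decrease along
   pi.  If q is the position of n-1, then for a < q the triple (a, q, n-1) is not a
   312 of pi^2, so pi(pi(a)) <= v; this forces every position >= v to carry a value
   below v, and a similar argument puts all the values above v first.  Hence
   pi = (v, v+1, ..., n-1, v-1, ..., 1, 0) with an increasing run of length
   j = n - v <= n/2.  So the permutations counted are the identity and, for m <= n
   and 1 <= j <= m/2, the permutation arranging 0, ..., m-1 as
   (m-j, ..., m-1, m-j-1, ..., 0) and fixing the rest: 1 + sum_(m <= n) floor(m/2)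
   of them. *)

From mathcomp Require Import all_boot all_fingroup zify.
Set Implicit Arguments. Unset Strict Implicit. Unset Printing Implicit Defensive.

Lemma containsb3 n (p : 'S_n) a b c :
  containsb p [:: a; b; c] =
  [exists i : 'I_n, exists k : 'I_n, exists l : 'I_n,
    [&& i < k, k < l, (p k < p i) == (b < a), (p l < p i) == (c < a)
      & (p l < p k) == (c < b)]].
Proof.
apply/existsP/existsP => [[idx /forallP idxP] | [i /existsP[k /existsP[l]]]].
- have idx_lt (s t : 'I_3) : s < t -> _ := implyP (forallP (idxP s) t).
  have /andP[lt_ik E1] := idx_lt (@Ordinal 3 0 isT) (@Ordinal 3 1 isT) isT.
  have /andP[_ E2] := idx_lt (@Ordinal 3 0 isT) (@Ordinal 3 2 isT) isT.
  have /andP[lt_kl E3] := idx_lt (@Ordinal 3 1 isT) (@Ordinal 3 2 isT) isT.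
  exists (idx (@Ordinal 3 0 isT)); apply/existsP; exists (idx (@Ordinal 3 1 isT)).
  by apply/existsP; exists (idx (@Ordinal 3 2 isT)); rewrite lt_ik lt_kl E1 E2 E3.
- move=> /and5P[lt_ik lt_kl E1 E2 E3]; exists [ffun s : 'I_3 => nth i [:: i; k; l] s].
  apply/forallP => -[[|[|[|s]]] lt_s3] //; apply/forallP => -[[|[|[|t]]] lt_t3] //=;
    by rewrite !ffunE /= ?lt_ik ?lt_kl ?E1 ?E2 ?E3 //= (ltn_trans lt_ik lt_kl).
Qed.

Definition rev_perm n : 'S_n := perm (@rev_ord_inj n).

Definition rev_conj n (s : 'S_n) : 'S_n := (rev_perm n * s * rev_perm n)%g.

Lemma rev_conjE n (s : 'S_n) o : rev_conj s o = rev_ord (s (rev_ord o)).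
Proof. by rewrite !permM !permE. Qed.

Lemma rev_conjK n : involutive (@rev_conj n).
Proof. by move=> s; apply/permP => o; rewrite !rev_conjE !rev_ordK. Qed.

Lemma rev_conjM n (s t : 'S_n) : rev_conj (s * t)%g = (rev_conj s * rev_conj t)%g.
Proof. by apply/permP => o; rewrite permM !rev_conjE rev_ordK permM. Qed.

Lemma rev_ord_ltE n (x y : 'I_n) : (rev_ord x < rev_ord y) = (y < x).
Proof. exact/ltn_sub2lE/ltn_ord. Qed.

Lemma containsb_rev_conj n (s : 'S_n) N a b c : a <= N -> b <= N -> c <= N ->
  containsb (rev_conj s) [:: a; b; c] -> containsb s [:: N - c; N - b; N - a].
Proof.
move=> le_aN le_bN le_cN; rewrite !containsb3 => /existsP[i /existsP[k /existsP[l]]].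
rewrite !rev_conjE !rev_ord_ltE => /and5P[lt_ik lt_kl E1 E2 E3].
apply/existsP; exists (rev_ord l); apply/existsP; exists (rev_ord k).
apply/existsP; exists (rev_ord i).
by rewrite !rev_ord_ltE !ltn_sub2lE // lt_ik lt_kl E1 E2 E3.
Qed.

Lemma avoidsb_rev_conj n (s : 'S_n) N a b c : a <= N -> b <= N -> c <= N ->
  avoidsb (rev_conj s) [:: a; b; c] = avoidsb s [:: N - c; N - b; N - a].
Proof.
move=> le_aN le_bN le_cN; congr negb; apply/idP/idP; first exact: containsb_rev_conj.
have := @containsb_rev_conj _ (rev_conj s) N (N - c) (N - b) (N - a).
by rewrite rev_conjK !subKn // !leq_subr; apply.
Qed.

Lemma c_count_rev_conj n :
  c_count n [:: 2; 3; 1] [:: 2; 1; 3] [:: 2; 3; 1] =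
  c_count n [:: 3; 1; 2] [:: 1; 3; 2] [:: 3; 1; 2].
Proof.
rewrite /c_count -[RHS](card_preimset _ (can_inj (@rev_conjK n))).
by apply: eq_card => s; rewrite !inE -rev_conjM !(@avoidsb_rev_conj _ _ 4).
Qed.

Definition pattern_free n (F : nat -> nat) (P : nat -> nat -> nat -> Prop) :=
  forall i k l, i < k -> k < l -> l < n -> ~ P (F i) (F k) (F l).

Definition occ312 (x y z : nat) := y < z < x.
Definition occ132 (x y z : nat) := x < z < y.

Lemma avoidsb_pattern_freeP n (s : 'S_n) (F : nat -> nat) a b c
    (P : nat -> nat -> nat -> Prop) :
  (forall o : 'I_n, (s o : nat) = F o) ->
  (forall x y z, x <> y -> x <> z -> y <> z ->
    P x y z <-> [/\ (y < x) = (b < a), (z < x) = (c < a) & (z < y) = (c < b)]) ->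
  avoidsb s [:: a; b; c] <-> pattern_free n F P.
Proof.
move=> sF P_iff; rewrite /avoidsb containsb3.
have F_neq (x y : 'I_n) : x < y -> F x <> F y.
  by rewrite -!sF => lt_xy /val_inj/perm_inj eq_xy; rewrite eq_xy ltnn in lt_xy.
have occP (i k l : 'I_n) : i < k -> k < l -> reflect (P (F i) (F k) (F l))
    [&& (s k < s i) == (b < a), (s l < s i) == (c < a) & (s l < s k) == (c < b)].
  move=> lt_ik lt_kl; have lt_il := ltn_trans lt_ik lt_kl; rewrite !sF.
  have Piff := P_iff _ _ _ (F_neq _ _ lt_ik) (F_neq _ _ lt_il) (F_neq _ _ lt_kl).
  by apply: (iffP and3P) => [[/eqP E1 /eqP E2 /eqP E3] | /Piff[-> -> ->] //]; apply/Piff.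
split=> [/existsPn no_occ i k l lt_ik lt_kl lt_ln | free].
  have lt_kn := ltn_trans lt_kl lt_ln; have lt_in := ltn_trans lt_ik lt_kn.
  have occ := occP (Ordinal lt_in) (Ordinal lt_kn) (Ordinal lt_ln) lt_ik lt_kl.
  have /existsPn/(_ (Ordinal lt_kn))/existsPn/(_ (Ordinal lt_ln)) := no_occ (Ordinal lt_in).
  by rewrite /= lt_ik lt_kl => /negP; apply: contra_not => /occ.
apply/existsPn => i; apply/existsPn => k; apply/existsPn => l.
apply/negP => /and3P[lt_ik lt_kl /(occP _ _ _ lt_ik lt_kl)].
exact: free lt_ik lt_kl (ltn_ord l).
Qed.

Lemma avoidsb312P n (s : 'S_n) (F : nat -> nat) : (forall o : 'I_n, (s o : nat) = F o) ->
  avoidsb s [:: 3; 1; 2] <-> pattern_free n F occ312.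
Proof.
move=> sF; apply: avoidsb_pattern_freeP => // x y z *.
by rewrite /occ312; split=> [? | []]; try split; lia.
Qed.

Lemma avoidsb132P n (s : 'S_n) (F : nat -> nat) : (forall o : 'I_n, (s o : nat) = F o) ->
  avoidsb s [:: 1; 3; 2] <-> pattern_free n F occ132.
Proof.
move=> sF; apply: avoidsb_pattern_freeP => // x y z *.
by rewrite /occ132; split=> [? | []]; try split; lia.
Qed.

Definition bij_below n (F : nat -> nat) :=
  [/\ forall i, i < n -> F i < n,
      forall i k, i < n -> k < n -> F i = F k -> i = k
    & forall x, x < n -> exists2 i, i < n & F i = x].

Definition av132_312_sq312 n F :=
  [/\ bij_below n F, pattern_free n F occ132, pattern_free n F occ312
    & pattern_free n (fun x => F (F x)) occ312].

Lemma perm_av132_312_sq312 n (s : 'S_n) (F : nat -> nat) :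
  (forall o : 'I_n, (s o : nat) = F o) ->
  avoidsb s [:: 1; 3; 2] -> avoidsb s [:: 3; 1; 2] -> avoidsb (s * s)%g [:: 3; 1; 2] ->
  av132_312_sq312 n F.
Proof.
move=> sF /(avoidsb132P sF) F132 /(avoidsb312P sF) F312.
have ssF o : ((s * s)%g o : nat) = F (F o) by rewrite permM !sF.
move=> /(@avoidsb312P _ _ (fun x => F (F x)) ssF) FF312; split=> //.
split=> [i lt_in | i k lt_in lt_kn | x lt_xn].
- by rewrite -(sF (Ordinal lt_in)).
- by rewrite -(sF (Ordinal lt_in)) -(sF (Ordinal lt_kn)) => /val_inj/perm_inj [].
- by exists ((s^-1)%g (Ordinal lt_xn)); rewrite // -sF permKV.
Qed.

Definition perm_fun n (s : 'S_n) (x : nat) : nat :=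
  if insub x is Some o then s o else x.

Lemma perm_funE n (s : 'S_n) (o : 'I_n) : (s o : nat) = perm_fun s o.
Proof. by rewrite /perm_fun valK. Qed.

(* On [0, m) this is (m-j, ..., m-1, m-j-1, ..., 1, 0); it fixes every i >= m, and it is
   the identity when j > m. *)
Definition updown m j i := if i < j then m - j + i else if i < m then m.-1 - i else i.

(* The pair (0, 0) stands for the identity. *)
Definition updown_ok m j := (m == 0) && (j == 0) || (0 < j <= m./2).

Section LastValueZero.

Variables (n : nat) (F : nat -> nat).
Hypotheses (F_le : forall i, i <= n -> F i <= n)
  (F_inj : forall i k, i <= n -> k <= n -> F i = F k -> i = k)
  (F_onto : forall x, x <= n -> exists2 i, i <= n & F i = x)
  (F132 : pattern_free n.+1 F occ132) (F312 : pattern_free n.+1 F occ312)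
  (FF312 : pattern_free n.+1 (fun x => F (F x)) occ312)
  (Fn : F n = 0) (n_gt0 : 0 < n).

Lemma F_neq_F0 i : 0 < i -> i <= n -> F i <> F 0.
Proof. by move=> i_gt0 le_in /(F_inj le_in (leq0n n)); lia. Qed.

Lemma F0_gt0 : 0 < F 0.
Proof. by have := F_neq_F0 n_gt0 (leqnn n); rewrite Fn; lia. Qed.

Lemma increasing_above_F0 i k : 0 < i -> i < k -> k <= n ->
  F 0 < F i -> F 0 < F k -> F i < F k.
Proof.
move=> i_gt0 lt_ik le_kn; have := F132 i_gt0 lt_ik (le_kn : k < n.+1).
by have := F_inj (ltnW (leq_trans lt_ik le_kn)) le_kn; rewrite /occ132; lia.
Qed.

Lemma decreasing_below_F0 i k : 0 < i -> i < k -> k <= n ->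
  F i < F 0 -> F k < F 0 -> F k < F i.
Proof.
move=> i_gt0 lt_ik le_kn; have := F312 i_gt0 lt_ik (le_kn : k < n.+1).
by have := F_inj (ltnW (leq_trans lt_ik le_kn)) le_kn; rewrite /occ312; lia.
Qed.

Lemma late_below_F0 x : F 0 <= x -> x <= n -> F x < F 0.
Proof.
move=> le_F0x le_xn; have [q le_qn Fq] := F_onto (leqnn n).
have FFa_le a : a < q -> F (F a) <= F 0.
  have lt_qn : q < n by have [eq_qn|] := eqVneq q n; [move: Fq; rewrite eq_qn Fn|]; lia.
  move=> lt_aq; have := FF312 lt_aq lt_qn (ltnSn n).
  by rewrite /occ312 Fq Fn; have := F0_gt0; lia.
have [-> | neq_xn] := eqVneq x n; first by rewrite Fn F0_gt0.
have [a le_an Fa] := F_onto le_xn.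
suff lt_aq : a < q.
  by have := FFa_le a lt_aq; have := @F_neq_F0 x; have := F0_gt0; rewrite Fa; lia.
rewrite ltnNge; apply/negP => le_qa.
have [q0 | q_gt0] := posnP q; first by move: Fq; rewrite q0; lia.
have F0_lt_Fq : F 0 < F q by have := F_neq_F0 q_gt0 le_qn; have := F_le (leq0n n); lia.
have lt_qa : q < a.
  by rewrite ltn_neqAle le_qa andbT; apply: contraNneq neq_xn => eq_qa; rewrite -Fa -eq_qa Fq.
have F0_lt_Fa : F 0 < F a by have := F_neq_F0 (leq_ltn_trans (leq0n q) lt_qa) le_an; lia.
by have := increasing_above_F0 q_gt0 lt_qa le_an F0_lt_Fq F0_lt_Fa; lia.
Qed.

Lemma tail_values B : 0 < B -> (forall x, B <= x -> x <= n -> F x < F 0) ->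
  forall k, B + k <= n -> F (n - k) = k.
Proof.
move=> B_gt0 below; elim=> [|k IHk] le_Bkn; first by rewrite subn0.
have {IHk} Fnk : F (n - k) = k by apply: IHk; lia.
have Fp_lt : F (n - k.+1) < F 0 by apply: below; lia.
have Fnk_lt : F (n - k) < F 0 by apply: below; lia.
have lt_k_Fp : k < F (n - k.+1).
  by have := @decreasing_below_F0 (n - k.+1) (n - k); rewrite Fnk; apply; lia.
have [l le_ln Fl] : exists2 l, l <= n & F l = k.+1 by apply: F_onto; lia.
have [l0 | l_gt0] := posnP l; first by move: Fl; rewrite l0; lia.
case: (ltngtP l (n - k.+1)) => [lt_lp | gt_lp | eq_lp]; last by move: Fl; rewrite eq_lp.
  by have := decreasing_below_F0 l_gt0 lt_lp; lia.
have [eq_l | lt_nk_l] : l = n - k \/ n - k < l by lia.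
  by move: Fl; rewrite eq_l Fnk; lia.
by have := @decreasing_below_F0 (n - k) l; rewrite Fnk; lia.
Qed.

Lemma sub_F0_lt_F0 : n - F 0 < F 0.
Proof.
have le_F0n := F_le (leq0n n).
have := tail_values F0_gt0 late_below_F0 (k := n - F 0).
by rewrite subnKC // subKn // => /(_ (leqnn n)) <-; apply: late_below_F0.
Qed.

Lemma head_values p : p <= n.+1 -> (forall t, 0 < t -> t < p -> F 0 < F t) ->
  forall t, t < p -> F t = F 0 + t.
Proof.
move=> le_pn above; elim/ltn_ind=> t IHt lt_tp.
have [-> | t_gt0] := posnP t; first by rewrite addn0.
have F0_lt_Ft := above t t_gt0 lt_tp.
have le_tn : t <= n by rewrite -ltnS (leq_trans lt_tp).
have le_Ft_n := F_le le_tn.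
case: (ltngtP (F t) (F 0 + t)) => // [lt_Ft | gt_Ft].
  have FFt : F (F t - F 0) = F t by rewrite IHt; lia.
  by have := F_inj (leq_trans (leq_subr _ _) le_Ft_n) le_tn FFt; lia.
have [l le_ln Fl] : exists2 l, l <= n & F l = F 0 + t by apply: F_onto; lia.
have [lt_lt | le_tl] := ltnP l t; first by move: Fl; rewrite IHt //; lia.
have lt_tl : t < l.
  by rewrite ltn_neqAle le_tl andbT; apply/eqP => eq_tl; move: Fl; rewrite -eq_tl; lia.
by have := F132 t_gt0 lt_tl (le_ln : l < n.+1); rewrite /occ132 Fl; lia.
Qed.

(* A first position p <= n - F 0 below F 0 would make (a, n - p, n) an occurrence of 312
   in F o F, where F a is the position of the value n. *)
Lemma early_above_F0 i : 0 < i -> i <= n - F 0 -> F 0 < F i.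
Proof.
move=> i_gt0 le_ir; rewrite ltnNge; apply/negP => le_Fi.
have exP : exists p, [&& 0 < p, p <= n - F 0 & F p <= F 0] by exists i; rewrite i_gt0 le_ir.
case: (ex_minnP exP) => p /and3P[p_gt0 le_pr le_Fp] p_min.
have le_pn : p <= n by rewrite (leq_trans le_pr) ?leq_subr.
have Fp_lt : F p < F 0 by have := F_neq_F0 p_gt0 le_pn; lia.
have above t : 0 < t -> t < p -> F 0 < F t.
  by move=> t_gt0 lt_tp; rewrite ltnNge; apply/negP => le_Ft; have := p_min t; lia.
have Fhead := head_values (leqW le_pn) above.
have Ftail : forall k, F 0 + k <= n -> F (n - k) = k := tail_values F0_gt0 late_below_F0.
have [q le_qn Fq] := F_onto (leqnn n).
have lt_pq : p < q.
  case: (ltngtP p q) => // [lt_qp | eq_pq]; last by move: Fq; rewrite -eq_pq; lia.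
  by move: Fq; rewrite Fhead //; lia.
have [a le_an Fa] := F_onto le_qn.
have lt_a_np : a < n - p.
  by rewrite ltnNge; apply/negP => le_np_a; move: Fa; rewrite -(subKn le_an) Ftail; lia.
have lt_np_n : n - p < n by rewrite ltn_subrL p_gt0 n_gt0.
have := FF312 lt_a_np lt_np_n (ltnSn n).
by rewrite /occ312 Ftail ?Fa ?Fq ?Fn; lia.
Qed.

Lemma last_zero_updown i : i <= n -> F i = updown n.+1 (n - F 0).+1 i.
Proof.
move=> le_in; have le_F0n := F_le (leq0n n).
have Fhead : forall t, t < (n - F 0).+1 -> F t = F 0 + t.
  apply: head_values => [|t t_gt0 /[!ltnS]]; last exact: early_above_F0.
  by rewrite ltnS leq_subr.
have below x : n - F 0 < x -> x <= n -> F x < F 0.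
  move=> lt_rx le_xn; rewrite ltnNge; apply/negP => le_F0_Fx.
  have le_Fx_n := F_le le_xn.
  have F0_lt_Fx : F 0 < F x by have := F_neq_F0 (leq_ltn_trans (leq0n _) lt_rx) le_xn; lia.
  have FFx : F (F x - F 0) = F x by rewrite Fhead; lia.
  by have := F_inj (leq_trans (leq_subr _ _) le_Fx_n) le_xn FFx; lia.
rewrite /updown !ltnS le_in; case: ifPn => [le_ir | ]; first by rewrite Fhead //; lia.
rewrite -ltnNge => lt_ri.
have := tail_values (ltn0Sn _) below (k := n - i).
by rewrite subKn // => ->; lia.
Qed.

End LastValueZero.

Lemma av132_312_sq312_last n F : av132_312_sq312 n.+1 F -> F n = 0 \/ F n = n.
Proof.
move=> [[F_lt F_inj F_onto] F132 F312 _].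
case: (ltngtP (F n) (F 0)) => [lt_Fn_F0 | gt_Fn_F0 | eq_Fn_F0].
- left; have [l le_ln Fl] := F_onto 0 isT.
  have [l0 | l_gt0] := posnP l; first by move: Fl; rewrite l0; lia.
  have [eq_ln | lt_ln] : l = n \/ l < n by lia.
    by move: Fl; rewrite eq_ln.
  by have := F312 0 l n l_gt0 lt_ln (ltnSn n); rewrite /occ312 Fl; lia.
- right; have [l le_ln Fl] := F_onto n (ltnSn n).
  have [l0 | l_gt0] := posnP l; first by move: Fl; rewrite l0; have := F_lt n; lia.
  have [eq_ln | lt_ln] : l = n \/ l < n by lia.
    by move: Fl; rewrite eq_ln.
  by have := F132 0 l n l_gt0 lt_ln (ltnSn n); rewrite /occ132 Fl; have := F_lt n; lia.
- by left; have := F_inj n 0 (ltnSn n) isT eq_Fn_F0; have := F_lt 0; lia.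
Qed.

Lemma av132_312_sq312_restrict n F :
  av132_312_sq312 n.+1 F -> F n = n -> av132_312_sq312 n F.
Proof.
move=> [[F_lt F_inj F_onto] F132 F312 FF312] Fn; split; last 3 first.
- by move=> i k l lt_ik lt_kl lt_ln; apply: F132; rewrite // ltnS ltnW.
- by move=> i k l lt_ik lt_kl lt_ln; apply: F312; rewrite // ltnS ltnW.
- by move=> i k l lt_ik lt_kl lt_ln; apply: FF312; rewrite // ltnS ltnW.
split=> [i lt_in | i k lt_in lt_kn | x lt_xn].
- by have := F_inj i n (ltnW lt_in) (ltnSn n); have := F_lt i (ltnW lt_in); lia.
- by apply: F_inj; apply: ltnW.
- have [i lt_in Fi] := F_onto x (ltnW lt_xn); exists i => //.
  rewrite ltn_neqAle -ltnS lt_in andbT.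
  by apply: contraTneq lt_xn => eq_in; rewrite -Fi eq_in Fn ltnn.
Qed.

Lemma av132_312_sq312_updown n F : av132_312_sq312 n F ->
  exists m j, [/\ updown_ok m j, m <= n & forall i, i < n -> F i = updown m j i].
Proof.
elim: n F => [|n IHn] F avF; first by exists 0, 0.
have [Fn0 | Fn] := av132_312_sq312_last avF; last first.
  have [m [j [ok_mj le_mn Fupdown]]] := IHn F (av132_312_sq312_restrict avF Fn).
  exists m, j; split=> [//||i]; first exact: leqW.
  rewrite ltnS leq_eqVlt => /predU1P[-> | /Fupdown //].
  by rewrite Fn /updown (ltnNge n m) le_mn /=; case: ifPn; lia.
have [[F_lt F_inj F_onto] F132 F312 FF312] := avF.
have [n0 | n_gt0] := posnP n.
  by exists 0, 0; split=> // i; rewrite n0 ltnS leqn0 => /eqP ->; rewrite -{1}n0 Fn0.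
exists n.+1, (n - F 0).+1; split=> //.
  by have := sub_F0_lt_F0 F_lt F_inj F_onto F132 F312 FF312 Fn0 n_gt0; rewrite /updown_ok; lia.
exact: last_zero_updown F_lt F_inj F_onto F132 F312 FF312 Fn0 n_gt0.
Qed.

(* For updown_ok m j, the square of updown m j reverses [0, j) and [m-j, m) and fixes
   everything else. *)
Definition updown_sq m j i :=
  if i < j then j.-1 - i else if i < m - j then i else if i < m then m - j + m.-1 - i else i.

Lemma updown_inj m j : injective (updown m j).
Proof. by move=> i k; rewrite /updown; do ![case: ifP => ?]; lia. Qed.

Lemma updown_lt n m j i : m <= n -> i < n -> updown m j i < n.
Proof. by rewrite /updown; do ![case: ifP => ?]; lia. Qed.

Lemma updown_sqE m j i : updown_ok m j -> updown m j (updown m j i) = updown_sq m j i.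
Proof.
rewrite /updown_ok /updown_sq {2}/updown; do ![case: ifP => ?].
all: by rewrite /updown; do ![case: ifP => ?]; lia.
Qed.

Lemma updown_free132 n m j : pattern_free n (updown m j) occ132.
Proof. by move=> i k l *; rewrite /occ132 /updown; do ![case: ifP => ?]; lia. Qed.

Lemma updown_free312 n m j : pattern_free n (updown m j) occ312.
Proof. by move=> i k l *; rewrite /occ312 /updown; do ![case: ifP => ?]; lia. Qed.

Lemma updown_sq_free312 n m j : updown_ok m j -> pattern_free n (updown_sq m j) occ312.
Proof.
by rewrite /updown_ok => ok i k l *; rewrite /occ312 /updown_sq; do ![case: ifP => ?]; lia.
Qed.

Lemma updown_ok_first m j : updown_ok m j -> updown m j 0 = m - j.
Proof. by rewrite /updown_ok /updown; do ![case: ifP => ?]; lia. Qed.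

Lemma updown_ok_last m j : updown_ok m j -> updown m j m.-1 = 0.
Proof. by rewrite /updown_ok /updown; do ![case: ifP => ?]; lia. Qed.

Lemma updown_ok_inj n m j m' j' :
  updown_ok m j -> updown_ok m' j' -> m <= n -> m' <= n ->
  (forall i, i < n -> updown m j i = updown m' j' i) -> m = m' /\ j = j'.
Proof.
move=> ok ok' le_mn le_m'n E; have [n0 | n_gt0] := posnP n.
  by move: ok ok'; rewrite /updown_ok n0 in le_mn le_m'n *; lia.
have : updown m' j' m.-1 = updown m' j' m'.-1 by rewrite -E ?updown_ok_last //; lia.
move=> /updown_inj eq_m; have := E 0 n_gt0; rewrite !updown_ok_first //.
by move: ok ok'; rewrite /updown_ok; lia.
Qed.

Definition updown_ord n (m : 'I_n.+1) j (i : 'I_n) : 'I_n :=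
  Ordinal (updown_lt j (ltn_ord m : m <= n) (ltn_ord i)).

Lemma updown_ord_inj n (m : 'I_n.+1) j : injective (updown_ord m j).
Proof. by move=> x y /(congr1 val) /updown_inj /val_inj. Qed.

Definition updown_perm n (m : 'I_n.+1) (j : nat) : 'S_n := perm (@updown_ord_inj n m j).

Lemma updown_permE n (m : 'I_n.+1) j (o : 'I_n) : (updown_perm m j o : nat) = updown m j o.
Proof. by rewrite permE. Qed.

Definition updown_params n := [set x : 'I_n.+1 * 'I_n.+1 | updown_ok x.1 x.2].

Lemma updown_perm_inj n :
  {in updown_params n &, injective (fun x : 'I_n.+1 * 'I_n.+1 => updown_perm x.1 x.2)}.
Proof.
move=> [m j] [m' j']; rewrite !inE /= => ok ok' E.
have E' i : i < n -> updown m j i = updown m' j' i.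
  by move=> lt_in; rewrite -(updown_permE m j (Ordinal lt_in)) E updown_permE.
have [eq_m eq_j] := updown_ok_inj ok ok' (ltn_ord m) (ltn_ord m') E'.
by congr pair; apply: val_inj.
Qed.

Lemma c_count_updown n :
  c_count n [:: 3; 1; 2] [:: 1; 3; 2] [:: 3; 1; 2] = #|updown_params n|.
Proof.
rewrite /c_count -(card_in_imset (@updown_perm_inj n)); apply: eq_card => s.
rewrite inE; apply/idP/imsetP => [/andP[/andP[s312 s132] ss312] | [[m j]]].
  have := perm_av132_312_sq312 (perm_funE s) s132 s312 ss312.
  move=> /av132_312_sq312_updown [m [j [ok le_mn sE]]].
  have le_jn : j <= n by move: ok; rewrite /updown_ok; lia.
  exists (inord m, inord j); first by rewrite inE /= !inordK.
  by apply/permP => o; apply/val_inj; rewrite /= updown_permE !inordK // perm_funE sE.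
rewrite inE /= => ok ->.
have sE o : (updown_perm m j o : nat) = updown m j o := updown_permE m j o.
have ssE o : ((updown_perm m j * updown_perm m j)%g o : nat) = updown_sq m j o.
  by rewrite permM !sE updown_sqE.
rewrite -andbA; apply/and3P; split.
- exact/(avoidsb312P sE)/updown_free312.
- exact/(avoidsb132P sE)/updown_free132.
- exact/(avoidsb312P ssE)/updown_sq_free312.
Qed.

Lemma sum_half n : \sum_(m < n.+1) m./2 = n./2 * uphalf n.
Proof.
elim: n => [|n IHn]; first by rewrite big_ord1.
by rewrite big_ord_recr IHn /= mulnS addnC mulnC.
Qed.

Lemma sum_ord_ltn N K : \sum_(i < N) (i < K : nat) = minn K N.
Proof. by elim: N => [|N IHN]; rewrite ?big_ord0 ?big_ord_recr ?IHN /=; lia. Qed.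

Lemma sum_updown_ok n (m : 'I_n.+1) :
  \sum_(j < n.+1) (updown_ok m j : nat) = (m == 0 :> nat) + m./2.
Proof.
rewrite big_ord_recl /updown_ok /= andbT orbF; congr (_ + _).
rewrite (eq_bigr (fun i : 'I_n => (i < m./2 : nat))) => [|i _]; last first.
  by rewrite /bump add1n /= andbF.
by rewrite sum_ord_ltn; have := ltn_ord m; lia.
Qed.

Lemma card_updown_params n : #|updown_params n| = (n./2 * uphalf n).+1.
Proof.
rewrite -sum1_card big_mkcond /= -sum_half.
rewrite (eq_bigr (fun x : 'I_n.+1 * 'I_n.+1 => (updown_ok x.1 x.2 : nat))) => [|x _].
  rewrite -(pair_bigA _ (fun m j : 'I_n.+1 => (updown_ok m j : nat))) /=.
  by rewrite (eq_bigr _ (fun m _ => sum_updown_ok m)) big_split /= big_ord_recl big1.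
by rewrite inE; case: updown_ok.
Qed.

Theorem theorem3p5 (n : nat) : 1 <= n ->
  c_count n [:: 2; 3; 1] [:: 2; 1; 3] [:: 2; 3; 1] =
    c_count n [:: 3; 1; 2] [:: 1; 3; 2] [:: 3; 1; 2] /\
  c_count n [:: 3; 1; 2] [:: 1; 3; 2] [:: 3; 1; 2] =
    (if odd n then (n./2) ^ 2 + n./2 + 1 else (n./2) ^ 2 + 1).
Proof.
(* The formula also holds for n = 0. *)
move=> _; split; first exact: c_count_rev_conj.
by rewrite c_count_updown card_updown_params uphalf_half; case: odd => /=; lia.
Qed.
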